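(* Let $\Sigma$ be a finite group, $A$ a difference closed pseudofield and $X\subseteq A^n$ a pseudovariety. Then every function $f\colon X\to A$ that is regular at every point of $X$ is given by a difference polynomial; that is, $\mathcal O_X(X)=A\{X\}$.
   Context: A difference ring is a commutative ring with identity with an action of $\Sigma$ by ring automorphisms. A pseudofield is an absolutely flat difference ring with no $\Sigma$-stable ideals other than $0$ and itself; it is difference closed if for every $n$ and every $\Sigma$-stable ideal $\mathfrak a$ of $R_n=A\{y_1,\dots,y_n\}$ the radical of $\mathfrak a$ equals $I(V(\mathfrak a))$. Here $A\{y_1,\dots,y_n\}$ is the polynomial ring over $A$ in indeterminates $\sigma y_i$ ($\sigma\in\Sigma$), with $\tau(\sigma y_i)=(\tau\sigma)y_i$; for $a\in A^n$, $f(a)$ is given by $\sigma y_i\mapsto\sigma(a_i)$; $V(E)=\{a\in A^n\mid f(a)=0\ \forall f\in E\}$, $I(X)=\{f\in R_n\mid f|_X=0\}$. A pseudovariety is a set $X=V(E)\subseteq A^n$; it carries the topology whose closed sets are the sets $X\cap V(E')$. $A\{X\}=R_n/I(X)$, identified with the ring of functions $X\to A$ given by difference polynomials. A function $f\colon X\to A$ is regular at $x\in X$ if there are an open $U\ni x$ in $X$ and $h,g\in R_n$ such that $g(y)$ is invertible in $A$ and $f(y)=h(y)/g(y)$ for all $y\in U$; $\mathcal O_X(U)$ is the ring of functions $U\to A$ regular at every point of $U$. *)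

From HB Require Import structures.
From mathcomp Require Import all_boot all_order all_algebra all_fingroup.
Set Implicit Arguments. Unset Strict Implicit. Unset Printing Implicit Defensive.
Import GRing.Theory.
Local Open Scope ring_scope.

(** Multivariate polynomials over A in k variables, as iterated
    univariate polynomials: mpoly A 0 = A, mpoly A k.+1 = {poly mpoly A k}.
    Variable number k' (the last one) of mpoly A k'.+1 is 'X. *)
Fixpoint mpoly (A : comNzRingType) (k : nat) : comNzRingType :=
  match k with
  | 0 => A
  | k'.+1 => GRing.ComNzRing.clone {poly mpoly A k'} _
  end.

Fixpoint mconst (A : comNzRingType) (k : nat) : A -> mpoly A k :=
  match k return A -> mpoly A k with
  | 0 => fun c => c
  | k'.+1 => fun c => (mconst k' c)%:P
  end.

Fixpoint mvar (A : comNzRingType) (k : nat) : 'I_k -> mpoly A k :=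
  match k return 'I_k -> mpoly A k with
  | 0 => fun j => mconst 0 0
  | k'.+1 => fun j =>
      match unlift ord_max j with
      | Some j' => (mvar A j')%:P
      | None => 'X
      end
  end.

Fixpoint meval (A B : comNzRingType) (k : nat) (phi : A -> B)
    : ('I_k -> B) -> mpoly A k -> B :=
  match k return ('I_k -> B) -> mpoly A k -> B with
  | 0 => fun _ p => phi p
  | k'.+1 => fun vals p =>
      (map_poly (meval phi (fun j : 'I_k' => vals (widen_ord (leqnSn k') j))) p)
        .[vals ord_max]
  end.

Section Diff.
Variables (gT : finGroupType) (A : comNzRingType) (act : gT -> {rmorphism A -> A}).

Definition is_diff_action : Prop :=
  (forall a, act 1%g a = a) /\ (forall s t a, act (s * t)%g a = act s (act t a)).

Definition is_ideal (R : comNzRingType) (I : R -> Prop) : Prop :=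
  [/\ I 0, (forall x y, I x -> I y -> I (x + y)) & (forall r x, I x -> I (r * x))].

Definition absolutely_flat : Prop := forall a : A, exists b : A, a = a * a * b.

Definition pseudofield : Prop :=
  absolutely_flat /\
  forall I : A -> Prop, is_ideal I -> (forall s x, I x -> I (act s x)) ->
    (forall x, I x -> x = 0) \/ (forall x, I x).

(** Difference polynomial ring R_n = A{y_1..y_n}: polynomial ring over A in
    the indeterminates sigma y_i, indexed by ('I_n * gT). *)
Definition dvarT (n : nat) : finType := ('I_n * gT)%type.
Definition dpoly (n : nat) : comNzRingType := mpoly A #|dvarT n|.

Definition dvar (n : nat) (i : 'I_n) (s : gT) : dpoly n :=
  mvar A (enum_rank ((i, s) : dvarT n)).

Definition deval (n : nat) (f : dpoly n) (a : 'I_n -> A) : A :=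
  meval (fun c : A => c)
    (fun j => let v : dvarT n := enum_val j in act v.2 (a v.1)) f.

Definition dact (n : nat) (t : gT) (f : dpoly n) : dpoly n :=
  meval (fun c : A => mconst #|dvarT n| (act t c))
    (fun j => let v : dvarT n := enum_val j in dvar v.1 (t * v.2)%g) f.

Definition sigma_stable (n : nat) (I : dpoly n -> Prop) : Prop :=
  forall t f, I f -> I (dact t f).

Definition dV (n : nat) (E : dpoly n -> Prop) (a : 'I_n -> A) : Prop :=
  forall g, E g -> deval g a = 0.

Definition dI (n : nat) (X : ('I_n -> A) -> Prop) (f : dpoly n) : Prop :=
  forall a, X a -> deval f a = 0.

Definition radical (R : comNzRingType) (I : R -> Prop) (f : R) : Prop :=
  exists k : nat, I (f ^+ k).

Definition difference_closed : Prop :=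
  forall (n : nat) (I : dpoly n -> Prop), is_ideal I -> sigma_stable I ->
    forall f, radical I f <-> dI (dV I) f.

(** Open subsets of X are
    X \ V(E'), i.e. { y in X | some e in E' has e(y) <> 0 }.  "g(y) invertible
    and f(y) = h(y)/g(y)" is written with an explicit inverse b. *)
Definition regular_at (n : nat) (E : dpoly n -> Prop)
    (f : {a : 'I_n -> A | dV E a} -> A) (x : {a : 'I_n -> A | dV E a}) : Prop :=
  exists (E' : dpoly n -> Prop) (h g : dpoly n),
    (exists e, E' e /\ deval e (proj1_sig x) <> 0) /\
    forall y : {a : 'I_n -> A | dV E a},
      (exists e, E' e /\ deval e (proj1_sig y) <> 0) ->
      exists b : A, deval g (proj1_sig y) * b = 1 /\
                    f y = deval h (proj1_sig y) * b.

End Diff.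

From HB Require Import structures.
From mathcomp Require Import all_boot all_order all_algebra all_fingroup.
Set Implicit Arguments. Unset Strict Implicit. Unset Printing Implicit Defensive.
Local Open Scope ring_scope.
Import GRing.Theory.

(** Consider the
    ideal D of "universal denominators" of f: the difference polynomials p
    such that, for every tau in Sigma, the function (tau p) * f on X is
    given by a difference polynomial.  D is a Sigma-stable ideal containing
    E.  Near a point x, regularity gives f = h/g on the open set {e <> 0};
    multiplying g by its other conjugates gives the Sigma-invariant norm
    N(g) = prod_s s(g), and e * N(g) lies in D with e(x) N(g)(x) <> 0
    (N(g)(x) is a product of units).  Since V(D) lies inside X, it is
    therefore empty, so I(V(D)) contains 1 and, A being difference closed,
    1 is in the radical of D, i.e. 1 is in D: f is a difference polynomial.
    The converse direction is immediate (take the denominator 1). *)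

Lemma meval_rmorph (A : comNzRingType) (k : nat) :
  forall (B : comNzRingType) (phi : {rmorphism A -> B}) (vals : 'I_k -> B),
  {F : {rmorphism mpoly A k -> B} | forall p, F p = meval phi vals p}.
Proof.
elim: k => [|k IH] B phi vals; first by exists phi.
have [F' F'E] := IH B phi (fun j : 'I_k => vals (widen_ord (leqnSn k) j)).
have cfu : commr_rmorph F' (vals ord_max) by move=> a; apply: mulrC.
exists (horner_morph cfu) => p /=.
by rewrite /horner_morph; congr (_.[_]); apply: eq_map_poly => c; exact: F'E.
Qed.

Lemma meval_ext (A B : comNzRingType) (k : nat) (phi1 phi2 : A -> B)
    (v1 v2 : 'I_k -> B) :
  phi1 =1 phi2 -> v1 =1 v2 -> meval phi1 v1 =1 meval phi2 v2.
Proof.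
elim: k B phi1 phi2 v1 v2 => [|k IH] B phi1 phi2 v1 v2 e1 e2 p /=; first exact: e1.
rewrite e2; congr (_.[_]); apply: eq_map_poly => c; apply: IH => // j; exact: e2.
Qed.

Lemma meval_comp (A B C : comNzRingType) (k : nat) (psi : {rmorphism B -> C})
    (phi : A -> B) (w : 'I_k -> B) (p : mpoly A k) :
  phi 0 = 0 -> psi (meval phi w p) = meval (psi \o phi) (psi \o w) p.
Proof.
elim: k B C psi phi w p => [|k IH] B C psi phi w p phi0 //=.
rewrite -horner_map -map_poly_comp_id0; last exact: rmorph0.
by congr (_.[_]); apply: eq_map_poly => c /=; exact: IH.
Qed.

Lemma mconst0 (A : comNzRingType) (k : nat) : mconst k (0 : A) = 0.
Proof. by elim: k => //= k ->. Qed.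

Lemma meval_mconst (A B : comNzRingType) (k : nat) (phi : {rmorphism A -> B})
    (v : 'I_k -> B) (c : A) :
  meval phi v (mconst k c) = phi c.
Proof.
elim: k B phi v => [|k IH] B phi v //=.
have [F' F'E] := meval_rmorph phi (fun j : 'I_k => v (widen_ord (leqnSn k) j)).
rewrite -(eq_map_poly F'E) map_polyC hornerC; exact: etrans (F'E _) (IH _ _ _).
Qed.

Lemma meval_mvar (A B : comNzRingType) (k : nat) (phi : {rmorphism A -> B})
    (v : 'I_k -> B) (j : 'I_k) :
  meval phi v (mvar A j) = v j.
Proof.
elim: k B phi v j => [|k IH] B phi v j; first by case: j.
have [F' F'E] := meval_rmorph phi (fun j : 'I_k => v (widen_ord (leqnSn k) j)).
rewrite /=; case: unliftP => [j'|] ->; last by rewrite -(eq_map_poly F'E) map_polyX hornerX.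
rewrite -(eq_map_poly F'E) map_polyC hornerC; apply: etrans (F'E _) _.
rewrite IH; congr (v _).
by apply: val_inj; rewrite /= /bump leqNgt ltn_ord.
Qed.

Section DifferenceEvaluation.
Variables (gT : finGroupType) (A : comNzRingType) (act : gT -> {rmorphism A -> A}).
Hypothesis act_action : is_diff_action act.

Lemma deval_rmorph (n : nat) (a : 'I_n -> A) :
  {F : {rmorphism dpoly gT A n -> A} | forall p, F p = deval act p a}.
Proof. exact: meval_rmorph (idfun : {rmorphism A -> A}) _. Qed.

Lemma deval0 n a : deval act (0 : dpoly gT A n) a = 0.
Proof. by have [F FE] := deval_rmorph a; rewrite -FE rmorph0. Qed.

Lemma deval1 n a : deval act (1 : dpoly gT A n) a = 1.
Proof. by have [F FE] := deval_rmorph a; rewrite -FE rmorph1. Qed.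

Lemma devalD n (p q : dpoly gT A n) a :
  deval act (p + q) a = deval act p a + deval act q a.
Proof. by have [F FE] := deval_rmorph a; rewrite -!FE rmorphD. Qed.

Lemma devalM n (p q : dpoly gT A n) a :
  deval act (p * q) a = deval act p a * deval act q a.
Proof. by have [F FE] := deval_rmorph a; rewrite -!FE rmorphM. Qed.

Lemma deval_prod n (P : pred gT) (G : gT -> dpoly gT A n) a :
  deval act (\prod_(s | P s) G s) a = \prod_(s | P s) deval act (G s) a.
Proof.
have [F FE] := deval_rmorph a; rewrite -FE rmorph_prod.
by apply: eq_bigr => s _; rewrite FE.
Qed.

Lemma deval_dact n t (p : dpoly gT A n) a :
  deval act (dact act t p) a = act t (deval act p a).
Proof.
have [F FE] := deval_rmorph a.
have act_mul := proj2 act_action.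
rewrite /dact -FE meval_comp; last by rewrite rmorph0 mconst0.
rewrite /deval (meval_comp (act t)) //; apply: meval_ext => [c|j] /=.
  by rewrite FE /deval (meval_mconst (idfun : {rmorphism A -> A})).
by rewrite FE /deval /dvar (meval_mvar (idfun : {rmorphism A -> A})) enum_rankK /= act_mul.
Qed.

(** The norm of g: the product of all its conjugates.  Its values are the
    norms of the values of g, so it is invariant, and a unit wherever g is. *)
Definition dnorm n (g : dpoly gT A n) : dpoly gT A n := \prod_(s : gT) dact act s g.

Definition dcofactor n (g : dpoly gT A n) : dpoly gT A n :=
  \prod_(s : gT | s != 1%g) dact act s g.

Lemma deval_dnorm n (g : dpoly gT A n) a :
  deval act (dnorm g) a = \prod_(s : gT) act s (deval act g a).
Proof. by rewrite deval_prod; apply: eq_bigr => s _; rewrite deval_dact. Qed.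

Lemma deval_dnorm_cofactor n (g : dpoly gT A n) a :
  deval act (dnorm g) a = deval act g a * deval act (dcofactor g) a.
Proof.
rewrite deval_dnorm (bigD1 1%g) //= (proj1 act_action) deval_prod.
by congr (_ * _); apply: eq_bigr => s _; rewrite deval_dact.
Qed.

Lemma deval_dnorm_invariant n (g : dpoly gT A n) t a :
  act t (deval act (dnorm g) a) = deval act (dnorm g) a.
Proof.
rewrite !deval_dnorm rmorph_prod.
under eq_bigr => s _ do rewrite -(proj2 act_action).
by rewrite [RHS](reindex_inj (mulgI t)).
Qed.

Lemma deval_dnorm_unit n (g : dpoly gT A n) a b :
  deval act g a * b = 1 -> deval act (dnorm g) a * \prod_(s : gT) act s b = 1.
Proof.
move=> gb1; rewrite deval_dnorm -big_split big1 // => s _.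
by rewrite /= -rmorphM gb1 rmorph1.
Qed.

Section Denominators.
Variables (n : nat) (E : dpoly gT A n -> Prop).
Variable f : {a : 'I_n -> A | dV act E a} -> A.

Definition denominators (p : dpoly gT A n) : Prop :=
  forall t : gT, exists q : dpoly gT A n,
    forall z, act t (deval act p (sval z)) * f z = deval act q (sval z).

Lemma denominators_ideal : is_ideal denominators.
Proof.
split.
- by move=> t; exists 0 => z; rewrite deval0 rmorph0 mul0r.
- move=> p q Dp Dq t; have [p' p'E] := Dp t; have [q' q'E] := Dq t.
  by exists (p' + q') => z; rewrite devalD rmorphD mulrDl p'E q'E devalD.
- move=> r p Dp t; have [p' p'E] := Dp t.
  by exists (dact act t r * p') => z; rewrite devalM rmorphM -mulrA p'E devalM deval_dact.
Qed.

Lemma denominators_stable : sigma_stable act denominators.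
Proof.
move=> s p Dp t; have [q qE] := Dp (t * s)%g.
by exists q => z; rewrite deval_dact -(proj2 act_action).
Qed.

(** Every equation of X is a denominator (its multiples vanish on X),
    hence the zero set of the denominators lies inside X. *)
Lemma dV_denominators_sub a : dV act denominators a -> dV act E a.
Proof.
move=> aV g Eg; apply: aV => t; exists 0 => z.
by rewrite (svalP z g Eg) rmorph0 mul0r deval0.
Qed.

(** Regularity at x produces a denominator that does not vanish at x:
    if f = h/g on {e <> 0}, then e times the norm of g is one. *)
Lemma regular_denominator x :
  regular_at f x -> exists p, denominators p /\ deval act p (sval x) <> 0.
Proof.
move=> [E' [h [g [[e [E'e ex]] fE]]]].
exists (e * dnorm g); split.
  move=> t; exists (dact act t e * dcofactor g * h) => z.
  rewrite !devalM deval_dact rmorphM deval_dnorm_invariant.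
  have [ez0|ez] := eqVneq (deval act e (sval z)) 0; first by rewrite ez0 rmorph0 !mul0r.
  have [b [gb fz]] := fE z (ex_intro _ e (conj E'e (fun ez0 => negP ez (introT eqP ez0)))).
  rewrite deval_dnorm_cofactor fz -!mulrA; congr (_ * _).
  by rewrite mulrCA; congr (_ * _); rewrite mulrCA gb mulr1.
have [b [gb _]] := fE x (ex_intro _ e (conj E'e ex)).
rewrite devalM => eN0; apply: ex.
by rewrite -[LHS]mulr1 -(deval_dnorm_unit gb) mulrA eN0 mul0r.
Qed.

Lemma denominators1_polynomial :
  denominators 1 -> exists h : dpoly gT A n, forall x, f x = deval act h (sval x).
Proof.
move=> D1; have [q qE] := D1 1%g.
by exists q => z; rewrite -qE deval1 rmorph1 mul1r.
Qed.

End Denominators.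

Lemma polynomial_regular n (E : dpoly gT A n -> Prop) (h : dpoly gT A n)
    (f : {a : 'I_n -> A | dV act E a} -> A) :
  (forall x, f x = deval act h (sval x)) -> forall x, regular_at f x.
Proof.
move=> fE x; exists (fun e => e = 1), h, 1.
have one_nonzero : deval act (1 : dpoly gT A n) (sval x) <> 0.
  by rewrite deval1; apply/eqP; exact: oner_neq0.
split; first by exists 1.
by move=> y _; exists 1; rewrite deval1 mulr1 fE mulr1.
Qed.

End DifferenceEvaluation.

Theorem theorem4p30 (gT : finGroupType) (A : comNzRingType)
    (act : gT -> {rmorphism A -> A}) (n : nat) (E : dpoly gT A n -> Prop) :
  is_diff_action act -> pseudofield act -> difference_closed act ->
  forall f : {a : 'I_n -> A | dV act E a} -> A,
    (forall x, regular_at f x) <->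
    (exists h : dpoly gT A n, forall x, f x = deval act h (proj1_sig x)).
Proof.
move=> act_action _ closed f; split; last by case=> h; exact: polynomial_regular.
move=> f_regular; apply: denominators1_polynomial.
(* V(D) is empty: a zero a of D lies on X, and a denominator is nonzero at a. *)
have one_in_IV : dI act (dV act (denominators f)) 1.
  move=> a aV; exfalso.
  have aX := dV_denominators_sub aV.
  have [p [Dp pa]] := regular_denominator act_action (f_regular (exist _ a aX)).
  exact: pa (aV p Dp).
have [k] := (closed n _ (denominators_ideal act_action f)
                (denominators_stable act_action (f := f)) 1).2 one_in_IV.
by rewrite expr1n.
Qed.
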